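(* Let $k\geq 2$ and let $G$ be a graph of order $n$ containing no cycle of length $2k+1$. Then for every vertex $w$ of $G$ with $d_w\geq 1$, \[ d_{w}+\frac{1}{d_{w}}\sum_{u\in\Gamma_{w}}d_{u}\leq n+2k-2. \]
   Context: All graphs are finite and simple. $\Gamma_w$ is the set of neighbors of $w$ and $d_w=|\Gamma_w|$ its degree. *)

From mathcomp Require Import all_boot all_order all_algebra.
Set Implicit Arguments. Unset Strict Implicit. Unset Printing Implicit Defensive.

Definition simple_graph (T : finType) (e : rel T) : Prop :=
  symmetric e /\ irreflexive e.

Definition nbhd (T : finType) (e : rel T) (w : T) : {set T} := [set u | e w u].
Definition deg (T : finType) (e : rel T) (w : T) : nat := #|nbhd e w|.

Definition has_cycle_of_length (T : finType) (e : rel T) (m : nat) : Prop :=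
  exists s : seq T, [/\ size s = m, uniq s & cycle e s].

From mathcomp Require Import all_boot all_order all_algebra.
From mathcomp Require Import zify.
Set Implicit Arguments. Unset Strict Implicit. Unset Printing Implicit Defensive.
Local Open Scope nat_scope.

(* Let G be a simple graph with no cycle of length 2k+1, w a vertex with
   d = d_w >= 1 and N = Gamma_w.  If the induced graph G[N] contained a path on
   2k vertices, w together with that path would close a (2k+1)-cycle; hence
   every path in G[N] has fewer than 2k vertices, and the Erdos-Gallai bound
   for such graphs gives  sum_{u in N} d_N(u) <= (2k-2) d.  Each neighbour u has
   at most n - d neighbours outside N, so  sum_{u in N} d_u <= (2k-2) d + d(n-d),
   which rearranges to the claimed inequality.

   The proof is by induction on |S|: a vertex of degree < k in
   G[S] is deleted; if G[S] has minimum degree >= k, a Posa rotation argument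
   turns a longest path P into a cycle on the vertex set of P, so no edge
   leaves P, each vertex of P has degree <= |P| - 1 <= 2k - 2, and P is
   deleted. *)

Section CrossingCycle.
Variables (T : eqType) (e : rel T).
Hypothesis e_sym : symmetric e.

Lemma cycle_of_crossing a q1 b q2 :
  path e a (q1 ++ b :: q2) -> e a b -> e (last a q1) (last b q2) ->
  cycle e (a :: q1 ++ rev (b :: q2)).
Proof.
rewrite cat_path /= => /and3P[path_q1 _ path_q2] e_ab e_cross.
rewrite rcons_cat cat_path path_q1 /= rcons_path rev_cons last_rcons.
rewrite e_sym e_ab andbT -rev_cons (lastI b q2) rev_rcons /= e_cross /=.
by rewrite rev_path (@eq_path _ _ e).
Qed.

End CrossingCycle.

(* A set X of entries of s is no larger than the set of positions of s that
   carry an element of X; used to count neighbours of the ends of a path. *)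
Lemma card_le_positions (T : finType) (x0 : T) (s : seq T) (n : nat)
  (X : {set T}) :
  size s = n -> {subset X <= s} ->
  #|X| <= #|[set i : 'I_n | nth x0 s i \in X]|.
Proof.
move=> size_s Xs.
apply: leq_trans (leq_imset_card (fun i : 'I_n => nth x0 s i) _).
apply/subset_leq_card/subsetP => x xX.
have lt_idx : index x s < n by rewrite -size_s index_mem Xs.
by apply/imsetP; exists (Ordinal lt_idx); rewrite ?inE /= nth_index ?Xs.
Qed.

Lemma pigeonhole_ord (m k : nat) (A B : {set 'I_m}) :
  m < 2 * k -> k <= #|A| -> k <= #|B| -> exists2 i, i \in A & i \in B.
Proof.
move=> lt_m kA kB.
have AB_small : #|A :|: B| <= m by rewrite -[m in _ <= m]card_ord max_card.
have /card_gt0P[i /setIP[iA iB]] : 0 < #|A :&: B|.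
  by move: (cardsUI A B) AB_small; lia.
by exists i.
Qed.

Section PathsInSimpleGraphs.
Variables (T : finType) (e : rel T).
Hypotheses (e_sym : symmetric e) (e_irr : irreflexive e).

Definition path_in (S : {set T}) (s : seq T) : bool :=
  [&& sorted e s, uniq s & all (fun x => x \in S) s].

Definition nbhd_in (S : {set T}) (u : T) : {set T} := [set v in S | e u v].
Definition deg_in (S : {set T}) (u : T) : nat := #|nbhd_in S u|.

Definition longest_path_in (S : {set T}) (P : seq T) : Prop :=
  path_in S P /\ forall s, path_in S s -> size s <= size P.

Lemma path_in_sub (A B : {set T}) (s : seq T) :
  A \subset B -> path_in A s -> path_in B s.
Proof.
move=> /subsetP AB /and3P[sorted_s uniq_s /allP sA].
by rewrite /path_in sorted_s uniq_s; apply/allP => x /sA /AB.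
Qed.

Lemma path_in_rev (S : {set T}) (s : seq T) : path_in S (rev s) = path_in S s.
Proof.
rewrite /path_in rev_sorted rev_uniq all_rev.
by rewrite (@eq_sorted _ _ e) // => x y; rewrite e_sym.
Qed.

Lemma exists_longest_path (S : {set T}) (x : T) (n : nat) :
  x \in S -> (forall s, path_in S s -> size s <= n) ->
  exists P, longest_path_in S P.
Proof.
move=> xS bounded.
pose has_path m := [exists s : m.-tuple T, path_in S s].
have ex : exists m, has_path m.
  by exists 1; apply/existsP; exists [tuple x]; rewrite /path_in /= xS.
have ub m : has_path m -> m <= n.
  by case/existsP => s /bounded; rewrite size_tuple.
case: (ex_maxnP ex ub) => N /existsP[P pathP] maxN.
exists P; split=> // s path_s; rewrite size_tuple; apply: maxN.
by apply/existsP; exists (in_tuple s).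
Qed.

(* All neighbours in S of the first vertex of a longest path lie on it,
   otherwise the path could be extended. *)
Lemma longest_path_head_nbr (S : {set T}) (v0 : T) (p : seq T) (u : T) :
  longest_path_in S (v0 :: p) -> u \in S -> e v0 u -> u \in v0 :: p.
Proof.
move=> [path_P longest] uS e_v0u; apply/negPn/negP => u_off.
suff /longest : path_in S (u :: v0 :: p) by rewrite /= ltnn.
move: path_P; rewrite /path_in /= [e u v0]e_sym e_v0u u_off uS.
by case/and3P=> -> -> ->.
Qed.

Lemma longest_path_last_nbr (S : {set T}) (v0 : T) (p : seq T) (u : T) :
  longest_path_in S (v0 :: p) -> u \in S -> e (last v0 p) u -> u \in v0 :: p.
Proof.
have rev_P : rev (v0 :: p) = last v0 p :: rev (belast v0 p).
  by rewrite lastI rev_rcons.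
move=> [path_P longest] uS e_lu; rewrite -mem_rev rev_P.
apply: longest_path_head_nbr uS e_lu; rewrite -rev_P.
by split=> [|s /longest]; rewrite ?path_in_rev // size_rev.
Qed.

(* If a cycle runs through exactly the vertices of a longest path P, no vertex
   of S outside P is adjacent to P: opening the cycle at that neighbour would
   give a longer path. *)
Lemma spanning_cycle_isolates (S : {set T}) (P c : seq T) (x y : T) :
  longest_path_in S P -> cycle e c -> perm_eq c P ->
  x \in S -> x \notin P -> y \in P -> ~~ e x y.
Proof.
move=> [/and3P[_ uniq_P /allP PS] longest] cycle_c perm_cP xS xP yP.
apply/negP => e_xy; have mem_cP := perm_mem perm_cP.
have [i r rot_c] := rot_to (etrans (mem_cP y) yP).
have perm_rP : perm_eq (y :: r) P by rewrite -rot_c perm_rot.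
have path_r : path e y r.
  by move: (cycle_c); rewrite -(rot_cycle i) rot_c /= rcons_path => /andP[].
suff /longest : path_in S (x :: y :: r) by rewrite -(perm_size perm_rP) /= ltnn.
have r_in_S : all (fun z => z \in S) (y :: r).
  by apply/allP => z; rewrite (perm_mem perm_rP) => /PS.
apply/and3P; split; first by rewrite /= e_xy.
  by rewrite cons_uniq (perm_uniq perm_rP) uniq_P -rot_c mem_rot mem_cP xP.
by apply/andP; split.
Qed.

(* The at
   least k positions i with v0 ~ p_(i+1) and the at least k positions i with
   p_i ~ v_last (among |P| - 1 < 2k) share some i, which closes a cycle on
   the vertices of P. *)
Lemma longest_path_closed (S : {set T}) (k : nat) (P : seq T) (x y : T) :
  longest_path_in S P -> size P < 2 * k ->
  (forall v, v \in S -> k <= deg_in S v) ->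
  x \in S -> x \notin P -> y \in P -> ~~ e x y.
Proof.
case: P => [//|v0 p] longest_P lt_P min_deg.
set m := size p.
pose A := [set i : 'I_m | nth v0 p i \in nbhd_in S v0].
pose B := [set i : 'I_m | nth v0 (belast v0 p) i \in nbhd_in S (last v0 p)].
have P_in_S : {subset v0 :: p <= S}.
  by case: longest_P => /and3P[_ _ /allP].
have v0S : v0 \in S by rewrite P_in_S ?mem_head.
have lastS : last v0 p \in S by rewrite P_in_S ?mem_last.
have A_big : k <= #|A|.
  apply: leq_trans (min_deg _ v0S) (card_le_positions _ _ _) => // u.
  rewrite inE => /andP[uS e_v0u].
  have := longest_path_head_nbr longest_P uS e_v0u.
  by rewrite inE; case: eqP e_v0u => [->|//]; rewrite e_irr.
have B_big : k <= #|B|.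
  apply: leq_trans (min_deg _ lastS) (card_le_positions _ (size_belast _ _) _).
  move=> u; rewrite inE => /andP[uS e_lu].
  have := longest_path_last_nbr longest_P uS e_lu.
  by rewrite lastI mem_rcons inE; case: eqP e_lu => [->|//]; rewrite e_irr.
have [i iA iB] := pigeonhole_ord (ltnW lt_P) A_big B_big.
set q1 := take i p; set b := nth v0 p i; set q2 := drop i.+1 p.
have size_q1 : size q1 = i by rewrite size_takel // ltnW.
have p_split : p = q1 ++ b :: q2 by rewrite -drop_nth // cat_take_drop.
have e_v0b : e v0 b by move: iA; rewrite !inE => /andP[].
have e_cross : e (last v0 q1) (last b q2).
  move: iB; rewrite !inE p_split belast_cat last_cat /=.
  by rewrite nth_cat size_belast size_q1 ltnn subnn /= e_sym => /andP[].
have path_p : path e v0 (q1 ++ b :: q2).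
  by rewrite -p_split; case: longest_P => /andP[].
have cycle_P := cycle_of_crossing e_sym path_p e_v0b e_cross.
apply: spanning_cycle_isolates longest_P cycle_P _.
by rewrite p_split perm_cons perm_cat2l perm_rev.
Qed.

Lemma sum_deg_in_delete (S : {set T}) (v : T) : v \in S ->
  \sum_(u in S) deg_in S u =
    2 * deg_in S v + \sum_(u in S :\ v) deg_in (S :\ v) u.
Proof.
move=> vS; rewrite (bigD1 v vS) /=.
rewrite (eq_bigl (fun u => u \in S :\ v)); last by move=> u; rewrite !inE andbC.
rewrite (eq_bigr (fun u => (e u v : nat) + deg_in (S :\ v) u)); last first.
  move=> u _; rewrite /deg_in (cardsD1 v) !inE vS /=; congr (_ + _).
  by apply: eq_card => z; rewrite !inE andbA.
rewrite big_split /= addnA mul2n -addnn; congr (_ + _ + _).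
rewrite /deg_in -sum1_card -big_mkcondr /=; apply: eq_bigl => u.
by rewrite !inE e_sym; case: (eqVneq u v) => [->|]; rewrite ?e_irr ?andbF.
Qed.

Lemma sum_deg_in_isolated (S C : {set T}) : C \subset S ->
  (forall x y, x \in S -> x \notin C -> y \in C -> ~~ e x y) ->
  \sum_(u in S) deg_in S u <=
    #|C| * (#|C|).-1 + \sum_(u in S :\: C) deg_in (S :\: C) u.
Proof.
move=> /subsetP CS isolated.
rewrite (bigID (fun u => u \in C)) /=; apply: leq_add.
  rewrite (eq_bigl (fun u => u \in C)); last first.
    by move=> u; case: (boolP (u \in C)) => [/CS|]; rewrite ?andbT ?andbF.
  rewrite -sum_nat_const; apply: leq_sum => u uC.
  rewrite /deg_in [#|C|](cardsD1 u) uC /=; apply/subset_leq_card/subsetP.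
  move=> z; rewrite !inE => /andP[zS e_uz].
  case: (eqVneq z u) e_uz => [->|_ e_uz]; first by rewrite e_irr.
  by apply: contraTT e_uz => zC; rewrite e_sym isolated.
apply/eq_leq/eq_big => [u|u]; first by rewrite !inE andbC.
rewrite /deg_in => /andP[uS uC]; apply: eq_card => z; rewrite !inE.
case: (boolP (z \in C)) => [zC|] /=; last by [].
by apply/negbTE/nandP; right; apply: isolated.
Qed.

Theorem erdos_gallai_even (S : {set T}) (k : nat) :
  (forall s, path_in S s -> size s < 2 * k) ->
  \sum_(u in S) deg_in S u <= (2 * k - 2) * #|S|.
Proof.
have [n] := ubnP #|S|; elim: n S => // n IH S lt_S short.
have short_sub (S' : {set T}) :
    S' \subset S -> forall s, path_in S' s -> size s < 2 * k.
  by move=> sub s /(path_in_sub sub) /short.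
case: (pickP [pred v in S | deg_in S v < k]) => [v /andP[vS low_v] | high].
  have := IH (S :\ v) _ (short_sub _ (subD1set S v)).
  rewrite (sum_deg_in_delete vS) (cardsD1 v S) vS in lt_S *.
  by move=> /(_ lt_S); lia.
have min_deg v : v \in S -> k <= deg_in S v.
  by move=> vS; have := high v; rewrite /= vS ltnNge => /negbFE.
have [->|[y yS]] := set_0Vmem S; first by rewrite big_set0.
have [P longest_P] : exists P, longest_path_in S P.
  apply: (exists_longest_path (n := 2 * k) yS) => s path_s.
  exact: ltnW (short s path_s).
have [/and3P[_ uniq_P /allP P_in_S] max_P] := longest_P.
pose C := [set u in P].
have size_C : #|C| = size P by rewrite cardsE; apply/card_uniqP.
have C_pos : 0 < #|C|.
  rewrite size_C; apply: leq_trans (max_P [:: y] _) => //.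
  by rewrite /path_in /= yS.
have P_short : size P < 2 * k by apply: short; case: longest_P.
have CS : C \subset S by apply/subsetP => z; rewrite inE => /P_in_S.
have C_isolated x z : x \in S -> x \notin C -> z \in C -> ~~ e x z.
  by rewrite !inE; apply: longest_path_closed longest_P P_short min_deg.
have split_S : #|S| = #|C| + #|S :\: C| by rewrite -(cardsID C S) (setIidPr CS).
have sum_rest := IH (S :\: C) _ (short_sub _ (subsetDl S C)).
have sum_split := sum_deg_in_isolated CS C_isolated.
have sum_C : #|C| * (#|C|).-1 <= #|C| * (2 * k - 2) by rewrite leq_mul2l; lia.
move: lt_S P_short sum_rest sum_split; rewrite split_S size_C; lia.
Qed.

(* Without cycles of length n+1, every path in G[Gamma_w] has fewer than n
   vertices: w followed by n of its vertices would be such a cycle. *)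
Lemma nbhd_paths_short (n : nat) (w : T) :
  0 < n -> ~ has_cycle_of_length e n.+1 ->
  forall s, path_in (nbhd e w) s -> size s < n.
Proof.
move=> n_pos no_cycle s /and3P[sorted_s uniq_s /allP s_nbhd].
rewrite ltnNge; apply/negP => long_s; apply: no_cycle.
have size_t : size (take n s) = n by rewrite size_takel.
have t_nbhd z : z \in take n s -> e w z by move/mem_take/s_nbhd; rewrite inE.
case t_eq : (take n s) size_t t_nbhd => [|a q] size_t t_nbhd.
  by rewrite -size_t in n_pos.
have uniq_t : uniq (a :: q) by rewrite -t_eq take_uniq.
have path_t : path e a q by rewrite -/(sorted e (a :: q)) -t_eq take_sorted.
exists (w :: a :: q); split; first by rewrite /= -size_t.
  by rewrite cons_uniq uniq_t andbT; apply/negP => /t_nbhd; rewrite e_irr.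
rewrite /= rcons_path t_nbhd ?mem_head //= path_t /=.
by rewrite e_sym t_nbhd // mem_last.
Qed.

Lemma deg_le_deg_in (S : {set T}) (u : T) : deg e u <= deg_in S u + #|~: S|.
Proof.
rewrite /deg -(cardsID S (nbhd e u)); apply: leq_add.
  by apply/eq_leq/eq_card => z; rewrite !inE andbC.
by apply/subset_leq_card/subsetP => z; rewrite !inE => /andP[].
Qed.

Lemma sum_deg_nbhd (k : nat) (w : T) :
  0 < k -> ~ has_cycle_of_length e (2 * k + 1) ->
  \sum_(u in nbhd e w) deg e u <=
    (2 * k - 2) * deg e w + deg e w * (#|T| - deg e w).
Proof.
move=> k_pos no_cycle.
have short : forall s, path_in (nbhd e w) s -> size s < 2 * k.
  apply: (@nbhd_paths_short (2 * k) w); first by rewrite muln_gt0.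
  by rewrite -addn1.
set N := nbhd e w.
apply: (@leq_trans (\sum_(u in N) (deg_in N u + #|~: N|))).
  by apply: leq_sum => u _; exact: deg_le_deg_in.
have card_out : #|~: N| = #|T| - #|N| by rewrite -(cardsC N) addKn.
rewrite big_split /= sum_nat_const card_out [#|N| * _]mulnC leq_add2r.
exact: erdos_gallai_even.
Qed.

End PathsInSimpleGraphs.

Import Order.TTheory GRing.Theory Num.Theory.
Local Open Scope ring_scope.

Lemma degree_average_bound (R : realFieldType) (d n c X : nat) :
  (0 < d)%N -> (d <= n)%N -> (X <= c * d + d * (n - d))%N ->
  d%:R + X%:R / d%:R <= (n + c)%:R :> R.
Proof.
move=> d_pos d_le_n X_le.
have d_neq0 : d%:R != 0 :> R by rewrite pnatr_eq0 -lt0n.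
rewrite -[X in X + _](mulfK d_neq0) -mulrDl ler_pdivrMr ?ltr0n //.
rewrite -!natrM -natrD ler_nat.
have -> : ((n + c) * d = d * d + (c * d + d * (n - d)))%N by nia.
by rewrite leq_add2l.
Qed.

Theorem mainTheorem9 (T : finType) (e : rel T) (k : nat)
  (hG : simple_graph e) (hk : (2 <= k)%N)
  (hfree : ~ has_cycle_of_length e (2 * k + 1)) (w : T)
  (hw : (1 <= deg e w)%N) :
  (deg e w)%:R + (\sum_(u in nbhd e w) ((deg e u)%:R : rat)) / (deg e w)%:R
    <= (#|T| + 2 * k - 2)%:R.
Proof.
have [e_sym e_irr] := hG.
have sum_bound := sum_deg_nbhd e_sym e_irr w (ltnW hk) hfree.
have -> : (#|T| + 2 * k - 2 = #|T| + (2 * k - 2))%N by lia.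
rewrite -natr_sum; apply: degree_average_bound sum_bound => //.
exact: max_card.
Qed.
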